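(* Let $\Gamma$ be the first Grigorchuk group with generators $a,b,c,d$, acting on the right on $\{0,1\}^{\mathbb N}$, and let $\rho=111\cdots$. For a word $w=w_1\cdots w_n$ over $\{a,b,c,d\}$ set $\delta(w)=\#\{\rho\, w_{i+1}\cdots w_n: i=0,\dots,n\}$. Call $w$ pre-reduced if it contains no two consecutive letters from $\{b,c,d\}$, and let the pre-reduction of $w$ be the word obtained from $w$ by repeatedly deleting subwords $bb,cc,dd$ and replacing subwords $bc$ or $cb$ by $d$, $cd$ or $dc$ by $b$, and $db$ or $bd$ by $c$, until it is pre-reduced. Then $\delta(w)=\delta(\text{pre-reduction of } w)$.
   Context: The first Grigorchuk group $\Gamma$ is the group of permutations of the set $\{0,1\}^{\mathbb N}$ of infinite binary sequences (acting on the right) generated by $a,b,c,d$, defined recursively for $x\in\{0,1\}$ and infinite sequences $u$ by: $(xu)a=(1-x)u$; $(0u)b=0(ua)$, $(1u)b=1(uc)$; $(0u)c=0(ua)$, $(1u)c=1(ud)$; $(0u)d=0u$, $(1u)d=1(ub)$. *)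

From Stdlib Require Import List Arith Relations ClassicalEpsilon.
Import ListNotations.

Inductive gen := ga | gb | gc | gd.

(* Infinite binary sequences u = u 0, u 1, u 2, ...; [false] = 0, [true] = 1. *)
Definition bseq := nat -> bool.

(* States of the Grigorchuk automaton: a generator or the identity. *)
Definition state := option gen.

(* Section of a state at the first letter x:
   (0u)b = 0(ua), (1u)b = 1(uc), (0u)c = 0(ua), (1u)c = 1(ud),
   (0u)d = 0u, (1u)d = 1(ub), (xu)a = (1-x)u. *)
Definition section (s : state) (x : bool) : state :=
  match s, x with
  | Some ga, _ => None
  | Some gb, false => Some ga
  | Some gb, true => Some gc
  | Some gc, false => Some ga
  | Some gc, true => Some gd
  | Some gd, false => None
  | Some gd, true => Some gb
  | None, _ => None
  end.

(* The n-th letter of (u)s, computed recursively; this is the unique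
   solution of the recursive definition in the paper. *)
Fixpoint act_state (s : state) (u : bseq) (n : nat) : bool :=
  match n with
  | 0 => match s with Some ga => negb (u 0) | _ => u 0 end
  | S m => act_state (section s (u 0)) (fun k => u (S k)) m
  end.

Definition act (u : bseq) (g : gen) : bseq := act_state (Some g) u.

Definition act_word (u : bseq) (w : list gen) : bseq := fold_left act w u.

Definition rho : bseq := fun _ => true.

(* Number of distinct elements of a list of infinite sequences
   (Leibniz equality of functions; classical decision). *)
Fixpoint ndistinct (l : list bseq) : nat :=
  match l with
  | [] => 0
  | x :: l' => if excluded_middle_informative (In x l') then ndistinct l'
               else S (ndistinct l')
  end.

Definition delta (w : list gen) : nat :=
  ndistinct (map (fun i => act_word rho (skipn i w)) (seq 0 (S (length w)))).

Definition is_bcd (g : gen) : Prop := g <> ga.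

Definition prereduced (w : list gen) : Prop :=
  forall p q x y, w = p ++ x :: y :: q -> ~ (is_bcd x /\ is_bcd y).

Inductive prered_rule : gen -> gen -> list gen -> Prop :=
  | rule_bb : prered_rule gb gb []
  | rule_cc : prered_rule gc gc []
  | rule_dd : prered_rule gd gd []
  | rule_bc : prered_rule gb gc [gd]
  | rule_cb : prered_rule gc gb [gd]
  | rule_cd : prered_rule gc gd [gb]
  | rule_dc : prered_rule gd gc [gb]
  | rule_db : prered_rule gd gb [gc]
  | rule_bd : prered_rule gb gd [gc].

Inductive prered_step : list gen -> list gen -> Prop :=
  | prered_step_intro p q x y r :
      prered_rule x y r -> prered_step (p ++ x :: y :: q) (p ++ r ++ q).

Definition is_prereduction (w w' : list gen) : Prop :=
  clos_refl_trans (list gen) prered_step w w' /\ prereduced w'.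

(* The letters b, c, d fix rho, and every rewriting rule x y -> r is an identity in
   the Klein group {1, b, c, d} of the Grigorchuk group.  So after a step
   p x y q -> p r q the points rho s, for s a suffix running through the rewritten
   pair, are unchanged, while those for s = x y q, y q or a suffix of r q all equal
   rho q, which is counted anyway.  Hence the set {rho s : s suffix of w}, whose size
   is delta(w), is invariant under pre-reduction. *)
From Stdlib Require Import Arith List FunctionalExtensionality ClassicalEpsilon.
Import ListNotations.

Lemma act_state_None u n : act_state None u n = u n.
Proof. revert u; induction n; intros u; simpl; auto. Qed.

Lemma act_state_rho s n : s <> Some ga -> act_state s rho n = rho n.
Proof.
  revert s; induction n as [|n IH]; intros s Hs.
  - destruct s as [[]|]; simpl; congruence.
  - simpl. apply IH. destruct s as [[]|]; simpl; congruence.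
Qed.

Lemma act_rho g : is_bcd g -> act rho g = rho.
Proof.
  intro Hg. apply functional_extensionality; intro n.
  apply act_state_rho; congruence.
Qed.

(* [compatible s1 s2] says that s1 and s2 lie both in {1, a} or both in
   {1, b, c, d}; [state_mul] is the product in that subgroup.  Two subgroups are
   needed because the sections of b, c, d at 0 lie in {1, a}. *)
Definition compatible (s1 s2 : state) : bool :=
  match s1, s2 with
  | Some ga, Some ga | Some ga, None | None, Some ga => true
  | Some ga, _ | _, Some ga => false
  | _, _ => true
  end.

Definition state_mul (s1 s2 : state) : state :=
  match s1, s2 with
  | None, s | s, None => s
  | Some gb, Some gc | Some gc, Some gb => Some gd
  | Some gc, Some gd | Some gd, Some gc => Some gb
  | Some gb, Some gd | Some gd, Some gb => Some gc
  | _, _ => None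
  end.

Lemma act_state_mul n : forall u s1 s2, compatible s1 s2 = true ->
  act_state s2 (act_state s1 u) n = act_state (state_mul s1 s2) u n.
Proof.
  induction n as [|n IH]; intros u s1 s2 H.
  - destruct s1 as [[]|], s2 as [[]|]; simpl in *; try discriminate;
      destruct (u 0); reflexivity.
  - simpl. rewrite IH;
      destruct s1 as [[]|], s2 as [[]|]; simpl in *; try discriminate;
      destruct (u 0); reflexivity.
Qed.

Lemma act_word_app u w1 w2 : act_word u (w1 ++ w2) = act_word (act_word u w1) w2.
Proof. apply fold_left_app. Qed.

Lemma prered_rule_act x y r u : prered_rule x y r -> act (act u x) y = act_word u r.
Proof.
  intro Hr. apply functional_extensionality; intro n. unfold act.
  rewrite act_state_mul by (destruct Hr; reflexivity).
  destruct Hr; simpl; try apply act_state_None; reflexivity.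
Qed.

Lemma prered_rule_bcd x y r : prered_rule x y r -> Forall is_bcd (x :: y :: r).
Proof. destruct 1; repeat constructor; discriminate. Qed.

Lemma ndistinct_nodup (dec : forall x y : bseq, {x = y} + {x <> y}) l :
  ndistinct l = length (nodup dec l).
Proof.
  induction l as [|x l IH]; simpl; auto.
  destruct (excluded_middle_informative (In x l)), (in_dec dec x l);
    simpl; tauto || congruence.
Qed.

Lemma ndistinct_same_elements l l' :
  (forall z, In z l <-> In z l') -> ndistinct l = ndistinct l'.
Proof.
  intro Hll'.
  set (dec := fun x y : bseq => excluded_middle_informative (x = y)).
  rewrite !(ndistinct_nodup dec).
  apply Nat.le_antisymm; apply NoDup_incl_length; try apply NoDup_nodup;
    intros z; rewrite !nodup_In; apply Hll'.
Qed.

Fixpoint suffixes (w : list gen) : list (list gen) :=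
  w :: match w with [] => [] | _ :: w' => suffixes w' end.

Definition suffix_images (u : bseq) (w : list gen) : list bseq :=
  map (act_word u) (suffixes w).

Lemma delta_suffix_images w : delta w = ndistinct (suffix_images rho w).
Proof.
  unfold delta, suffix_images. f_equal.
  induction w as [|a w IH]; simpl; auto.
  f_equal. rewrite <- seq_shift, map_map. exact IH.
Qed.

Lemma suffix_images_fixed_prefix u s q : Forall (fun g => act u g = u) s ->
  forall z, In z (suffix_images u (s ++ q)) <-> In z (suffix_images u q).
Proof.
  induction 1 as [|a s Ha _ IH]; intro z; [reflexivity|].
  unfold suffix_images; simpl; fold (suffix_images u (s ++ q)); rewrite Ha, <- IH.
  assert (In (act_word u (s ++ q)) (suffix_images u (s ++ q)))
    by (apply in_map; destruct (s ++ q); left; reflexivity).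
  split; [intros [<- | Hz]|]; auto.
Qed.

Lemma suffix_images_app_l u p m m' :
  (forall v, act_word v m = act_word v m') ->
  (forall z, In z (suffix_images u m) <-> In z (suffix_images u m')) ->
  forall z, In z (suffix_images u (p ++ m)) <-> In z (suffix_images u (p ++ m')).
Proof.
  intros Hact Horb. induction p as [|a p IH]; intro z; [apply Horb|].
  unfold suffix_images; simpl; fold (suffix_images u (p ++ m)) (suffix_images u (p ++ m')).
  rewrite !act_word_app, Hact.
  specialize (IH z). tauto.
Qed.

Lemma prered_step_delta w w' : prered_step w w' -> delta w = delta w'.
Proof.
  destruct 1 as [p q x y r Hr].
  rewrite !delta_suffix_images. apply ndistinct_same_elements.
  assert (Hfix : Forall (fun g => act rho g = rho) ([x; y] ++ r))
    by (eapply Forall_impl; [exact act_rho | exact (prered_rule_bcd _ _ _ Hr)]).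
  apply Forall_app in Hfix as [Hxy Hr'].
  apply (suffix_images_app_l rho p ([x; y] ++ q) (r ++ q)).
  - intro v. rewrite !act_word_app. f_equal. exact (prered_rule_act _ _ _ v Hr).
  - intro z. rewrite !suffix_images_fixed_prefix by assumption. reflexivity.
Qed.

Theorem lemma4p1 (w w' : list gen) :
  is_prereduction w w' -> delta w = delta w'.
Proof.
  intros [Hsteps _]. induction Hsteps.
  - apply prered_step_delta; assumption.
  - reflexivity.
  - congruence.
Qed.
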